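(* Let $G=(V,E)$ be a $D$-regular unweighted Ricci-flat graph with $D\ge2$ and $\mu\equiv\mu_0>0$, and let $\alpha\in(0,1)$. Let $x_*\in V$ and $\psi:V\to\mathbb R$ with $\psi(x_* )>0$ and $\psi(y)>0$ for all $y\sim x_*$. Let $v:V\to\mathbb R$ be such that $M(x):=\psi(x)\mathcal L_\alpha(v)(x)$ satisfies $M(x_* )>0$ and $M(x_* )\ge M(y)$ for all $y\sim x_*$. Then $$\mathcal C_\alpha(v)(x_* )\ge F_\alpha(Lv(x_* ))-\frac1{\mu_0}\mathcal L_\alpha(v)(x_* )\sum_{y\sim x_*}e^{v(y)-v(x_* )}\frac{|\psi(x_* )-\psi(y)|}{\psi(y)},$$ where $F_\alpha(a)=\frac{D}{\mu_0^2}\exp\big(-\frac{\mu_0(1-\alpha)}Da\big)\big[\exp\big(\frac{2(1-\alpha)\mu_0}Da\big)+\frac{1-\alpha}\alpha\exp\big(-\frac{2\alpha\mu_0}Da\big)-\frac1\alpha\big]$.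
   Context: Unweighted: $w_{xy}=1$. $\Delta u(x)=\frac1{\mu_0}\sum_{y\sim x}(u(y)-u(x))$, $L=-\Delta$, $\Psi_H(v)(x)=\frac1{\mu_0}\sum_{y\sim x}H(v(y)-v(x))$, $\Upsilon'(z)=e^z-1$. $\mathcal L_\alpha(v)(x)=-\frac1\alpha\Psi_{\Upsilon'}(\alpha v)(x)$; $\mathcal C_\alpha(v)(x)=\frac1{\mu_0}\sum_{y\sim x}e^{\alpha(v(y)-v(x))}(\Psi_{\Upsilon'}(v)(y)-\Psi_{\Upsilon'}(v)(x))$. Ricci-flat: $G$ is $D$-regular and for every $x$, with $N(x)=\{x\}\cup\{y:y\sim x\}$, there exist $\eta_1,\dots,\eta_D:N(x)\to V$ with (i) $\eta_i(y)\sim y$; (ii) $\eta_i(y)\neq\eta_j(y)$ for $i\ne j$; (iii) for each $i$, $(\eta_i(\eta_j(x)))_j$ and $(\eta_j(\eta_i(x)))_j$ coincide as multisets. *)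

From Stdlib Require Import Reals Lra List Permutation.
Import ListNotations.
Open Scope R_scope.

Definition adj {V : Type} (nb : V -> list V) (x y : V) : Prop := In y (nb x).

Definition regular_simple_graph {V : Type} (nb : V -> list V) (D : nat) : Prop :=
  (forall x, NoDup (nb x)) /\
  (forall x, length (nb x) = D) /\
  (forall x y, adj nb x y -> adj nb y x) /\
  (forall x, ~ adj nb x x).

(* Ricci-flat (in the sense of Chung–Yau), for a D-regular graph. The maps
   eta_1..eta_D : N(x) -> V are indexed by i < D and given as total maps,
   with conditions imposed only on N(x) = {x} U {y : y ~ x}. *)
Definition ricci_flat {V : Type} (nb : V -> list V) (D : nat) : Prop :=
  regular_simple_graph nb D /\
  forall x : V, exists eta : nat -> V -> V,
    (forall i y, (i < D)%nat -> (y = x \/ adj nb x y) -> adj nb y (eta i y)) /\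
    (forall i j y, (i < D)%nat -> (j < D)%nat -> i <> j ->
        (y = x \/ adj nb x y) -> eta i y <> eta j y) /\
    (forall i, (i < D)%nat ->
        Permutation (map (fun j => eta i (eta j x)) (seq 0 D))
                    (map (fun j => eta j (eta i x)) (seq 0 D))).

Definition sum_nb {V : Type} (nb : V -> list V) (x : V) (f : V -> R) : R :=
  fold_right Rplus 0 (map f (nb x)).

(* unweighted, measure mu = mu0 constant *)
Definition Laplacian {V : Type} (nb : V -> list V) (mu0 : R) (u : V -> R) (x : V) : R :=
  / mu0 * sum_nb nb x (fun y => u y - u x).

Definition Lop {V : Type} (nb : V -> list V) (mu0 : R) (u : V -> R) (x : V) : R :=
  - Laplacian nb mu0 u x.

Definition PsiH {V : Type} (nb : V -> list V) (mu0 : R) (H : R -> R) (v : V -> R) (x : V) : R :=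
  / mu0 * sum_nb nb x (fun y => H (v y - v x)).

Definition Upsilon' (z : R) : R := exp z - 1.

Definition Lalpha {V : Type} (nb : V -> list V) (mu0 alpha : R) (v : V -> R) (x : V) : R :=
  - / alpha * PsiH nb mu0 Upsilon' (fun z => alpha * v z) x.

Definition Calpha {V : Type} (nb : V -> list V) (mu0 alpha : R) (v : V -> R) (x : V) : R :=
  / mu0 * sum_nb nb x (fun y =>
     exp (alpha * (v y - v x)) *
     (PsiH nb mu0 Upsilon' v y - PsiH nb mu0 Upsilon' v x)).

Definition Falpha (D : nat) (mu0 alpha a : R) : R :=
  INR D / (mu0 ^ 2) * exp (- (mu0 * (1 - alpha) / INR D) * a) *
  ( exp (2 * (1 - alpha) * mu0 / INR D * a)
    + (1 - alpha) / alpha * exp (- (2 * alpha * mu0 / INR D) * a)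
    - / alpha ).

From Stdlib Require Import Reals List.
From Coquelicot Require Import Coquelicot.
From Stdlib Require Import Arith Lra Lia Permutation.
Open Scope R_scope.

(* Along the Ricci-flat frame [y j = eta_j x], [z i j = eta_i (y j)] put
   [B j = v (y j) - v x] and [C i j = v (z i j) - v x]; then
   [mu0^2 Calpha v x = sum_(i,j) exp (C i j - (1 - alpha) B j) - (sum exp (alpha B)) (sum exp B)].
   Each summand is bounded below by a tangent of the convex map [X |-> X^(1/alpha)], which is
   linear in [exp (alpha C i j)]; only the term where [z i j = x] is kept exactly.  The
   Ricci-flat symmetry turns the row sums [sum_j exp (alpha C i j)] into sums over the
   neighbours of [y i], which the maximality of [psi * Lalpha v] at [x] bounds from below: this
   produces the error term.  The exact terms add up to [sum_j Fpair (B j) (B (σ j))] for a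
   permutation [σ]; since [Fpair] is supermodular and [Fpair b c + Fpair c b >= 2 Fhat (b + c)]
   with [Fhat] convex, uncrossing reduces this sum to pairs and then to
   [D * Fhat (2 * mean B)], which is [mu0^2 Falpha (Lop v x)]. *)

Lemma exp_le_mono x y : x <= y -> exp x <= exp y.
Proof. intros [Hlt | ->]; [left; apply exp_increasing, Hlt | right; reflexivity]. Qed.

Lemma exp_convex a p q : 0 < a < 1 ->
  exp (a * p + (1 - a) * q) <= a * exp p + (1 - a) * exp q.
Proof.
  intros Ha. set (w := a * p + (1 - a) * q).
  assert (Htan : forall t, exp w * (1 + (t - w)) <= exp t).
  { intros t. replace (exp t) with (exp w * exp (t - w)) by (rewrite <- exp_plus; f_equal; ring).
    apply Rmult_le_compat_l; [left; apply exp_pos | apply exp_ineq1_le]. }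
  pose proof (Htan p) as Hp; pose proof (Htan q) as Hq.
  replace (exp w) with (exp w * (a * (1 + (p - w)) + (1 - a) * (1 + (q - w)))) at 1
    by (unfold w; ring).
  nra.
Qed.

(* The tangent at [exp (a * (b + c))] of the convex map [X |-> X ^ (1/a)], evaluated at
   [X = exp (a * x)] and multiplied by [exp (- (1 - a) * c)]. *)
Lemma exp_power_tangent a b c x : 0 < a < 1 ->
  (1 - / a) * exp b * exp (a * c) + / a * exp ((1 - a) * b) * exp (a * x)
  <= exp (x - (1 - a) * c).
Proof.
  intros Ha. set (t := x - b - c).
  pose proof (exp_convex a t 0 Ha) as Ht.
  rewrite Rmult_0_r, Rplus_0_r, exp_0, Rmult_1_r in Ht.
  set (E := exp (b + a * c)).
  assert (HE : 0 < E) by apply exp_pos.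
  assert (E1 : exp b * exp (a * c) = E) by (unfold E; rewrite exp_plus; ring).
  assert (E2 : exp ((1 - a) * b) * exp (a * x) = E * exp (a * t))
    by (unfold E, t; rewrite <- !exp_plus; f_equal; ring).
  replace ((1 - / a) * exp b * exp (a * c) + / a * exp ((1 - a) * b) * exp (a * x))
    with ((1 - / a) * (exp b * exp (a * c)) + / a * (exp ((1 - a) * b) * exp (a * x))) by ring.
  rewrite E1, E2.
  replace (exp (x - (1 - a) * c)) with (E * exp t) by (unfold E, t; rewrite <- exp_plus; f_equal; ring).
  assert (Hdiv : / a * exp (a * t) <= / a * (a * exp t + (1 - a)))
    by (apply Rmult_le_compat_l; [left; apply Rinv_0_lt_compat |]; lra).
  replace (/ a * (a * exp t + (1 - a))) with (exp t + / a - 1) in Hdiv by (field; lra).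
  replace ((1 - / a) * E + / a * (E * exp (a * t))) with (E * (1 - / a + / a * exp (a * t))) by ring.
  apply Rmult_le_compat_l; lra.
Qed.

Lemma above_tangent (f df ddf : R -> R) :
  (forall x, is_derive f x (df x)) -> (forall x, is_derive df x (ddf x)) ->
  (forall x, 0 <= ddf x) -> forall x y, f x + df x * (y - x) <= f y.
Proof.
  intros Hf Hdf Hdd x y.
  assert (Hcont : forall g dg : R -> R, (forall t, is_derive g t (dg t)) ->
            forall t, continuity_pt g t).
  { intros g dg Hg t. apply continuity_pt_filterlim.
    exact (ex_derive_continuous g t (ex_intro _ _ (Hg t))). }
  destruct (MVT_gen f x y df) as [c [Hc Ef]]; [intros; apply Hf | intros; eapply Hcont, Hf |].
  destruct (MVT_gen df x c ddf) as [c' [_ Edf]]; [intros; apply Hdf | intros; eapply Hcont, Hdf |].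
  assert (Hbetween : 0 <= (c - x) * (y - x)) by (unfold Rmin, Rmax in Hc; destruct (Rle_dec x y); nra).
  pose proof (Hdd c').
  replace (f y) with (f x + df c * (y - x)) by lra.
  replace (df c) with (df x + ddf c' * (c - x)) by lra.
  nra.
Qed.

Definition Fhat (a s : R) : R :=
  exp (- ((1 - a) / 2) * s) + (1 - a) / a * exp ((1 + a) / 2 * s) - / a * exp ((1 - a) / 2 * s).

Lemma Falpha_Fhat D mu0 a s : (0 < D)%nat -> mu0 <> 0 -> a <> 0 ->
  Falpha D mu0 a (- / mu0 * s) = / mu0 * / mu0 * (INR D * Fhat a (2 * s / INR D)).
Proof.
  intros HD Hmu Ha. assert (HD' : INR D <> 0) by (apply not_0_INR; lia).
  unfold Falpha, Fhat.
  set (E := exp (- (mu0 * (1 - a) / INR D) * (- / mu0 * s))).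
  assert (E1 : E * exp (2 * (1 - a) * mu0 / INR D * (- / mu0 * s))
               = exp (- ((1 - a) / 2) * (2 * s / INR D)))
    by (unfold E; rewrite <- exp_plus; f_equal; field; auto).
  assert (E2 : E * exp (- (2 * a * mu0 / INR D) * (- / mu0 * s))
               = exp ((1 + a) / 2 * (2 * s / INR D)))
    by (unfold E; rewrite <- exp_plus; f_equal; field; auto).
  assert (E3 : E = exp ((1 - a) / 2 * (2 * s / INR D))) by (unfold E; f_equal; field; auto).
  rewrite <- E1, <- E2, <- E3. field. auto.
Qed.

Lemma Fhat_nonneg a s : 0 < a < 1 -> 0 <= Fhat a s.
Proof.
  intros Ha. unfold Fhat.
  pose proof (exp_convex a (- ((1 - a) / 2) * s) ((1 + a) / 2 * s) Ha) as H.
  replace (a * (- ((1 - a) / 2) * s) + (1 - a) * ((1 + a) / 2 * s)) with ((1 - a) / 2 * s) in H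
    by field.
  apply Rmult_le_reg_l with a; [lra |].
  replace (a * (exp (- ((1 - a) / 2) * s) + (1 - a) / a * exp ((1 + a) / 2 * s)
             - / a * exp ((1 - a) / 2 * s)))
    with (a * exp (- ((1 - a) / 2) * s) + (1 - a) * exp ((1 + a) / 2 * s)
          - exp ((1 - a) / 2 * s)) by (field; lra).
  lra.
Qed.

Lemma Fhat_above_tangent a x : 0 < a < 1 ->
  exists K, forall y, Fhat a x + K * (y - x) <= Fhat a y.
Proof.
  intros Ha.
  set (dF s := - ((1 - a) / 2) * exp (- ((1 - a) / 2) * s)
               + (1 - a) / a * ((1 + a) / 2) * exp ((1 + a) / 2 * s)
               - / a * ((1 - a) / 2) * exp ((1 - a) / 2 * s)).
  set (ddF s := ((1 - a) / 2) ^ 2 * exp (- ((1 - a) / 2) * s)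
                + (1 - a) / a * ((1 + a) / 2) ^ 2 * exp ((1 + a) / 2 * s)
                - / a * ((1 - a) / 2) ^ 2 * exp ((1 - a) / 2 * s)).
  exists (dF x). apply (above_tangent _ dF ddF).
  - intros s. unfold Fhat, dF. auto_derive; [auto | field; lra].
  - intros s. unfold dF, ddF. auto_derive; [auto | field; lra].
  - intros s.
    replace (ddF s) with (((1 - a) / 2) ^ 2 * Fhat a s + (1 - a) * exp ((1 + a) / 2 * s))
      by (unfold ddF, Fhat; field; lra).
    pose proof (Fhat_nonneg a s Ha). pose proof (exp_pos ((1 + a) / 2 * s)).
    assert (0 <= ((1 - a) / 2) ^ 2) by apply pow2_ge_0. nra.
Qed.

Definition Fpair (a b c : R) : R :=
  exp (- (1 - a) * b) + (1 - a) / a * exp (a * b + c) - / a * exp ((1 - a) * c).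

Lemma Fpair_Fhat a b c :
  Fpair a b c = exp ((1 - a) / 2 * (c - b)) * Fhat a (b + c).
Proof.
  set (E := exp ((1 - a) / 2 * (c - b))).
  assert (E1 : E * exp (- ((1 - a) / 2) * (b + c)) = exp (- (1 - a) * b))
    by (unfold E; rewrite <- exp_plus; f_equal; field).
  assert (E2 : E * exp ((1 + a) / 2 * (b + c)) = exp (a * b + c))
    by (unfold E; rewrite <- exp_plus; f_equal; field).
  assert (E3 : E * exp ((1 - a) / 2 * (b + c)) = exp ((1 - a) * c))
    by (unfold E; rewrite <- exp_plus; f_equal; field).
  unfold Fpair, Fhat. rewrite <- E1, <- E2, <- E3. ring.
Qed.

Lemma Fhat_le_Fpair_sym a b c : 0 < a < 1 ->
  2 * Fhat a (b + c) <= Fpair a b c + Fpair a c b.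
Proof.
  intros Ha. rewrite !Fpair_Fhat, (Rplus_comm c b).
  set (E := exp ((1 - a) / 2 * (c - b))). set (E' := exp ((1 - a) / 2 * (b - c))).
  assert (HEE : E * E' = 1)
    by (unfold E, E'; rewrite <- exp_plus, <- exp_0; f_equal; ring).
  assert (0 < E') by apply exp_pos.
  assert (Hsq : 0 <= E' * (E - 1) ^ 2) by (apply Rmult_le_pos; [lra | apply pow2_ge_0]).
  pose proof (Fhat_nonneg a (b + c) Ha).
  (* [E + 1/E >= 2] *)
  assert (2 <= E + E') by nra.
  nra.
Qed.

Definition supermodular (f : R -> R -> R) : Prop :=
  forall b b' c c', b <= b' -> c <= c' -> f b c' + f b' c <= f b c + f b' c'.

Lemma Fpair_supermodular a : 0 < a < 1 -> supermodular (Fpair a).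
Proof.
  intros Ha b b' c c' Hb Hc. unfold Fpair. rewrite !exp_plus.
  assert (exp (a * b) <= exp (a * b')) by (apply exp_le_mono; nra).
  assert (exp c <= exp c') by (apply exp_le_mono; lra).
  assert (0 <= (exp (a * b') - exp (a * b)) * (exp c' - exp c)) by nra.
  assert (0 < (1 - a) / a) by (apply Rdiv_lt_0_compat; lra).
  nra.
Qed.

Definition lsum {A : Type} (f : A -> R) (l : list A) : R := fold_right Rplus 0 (map f l).

Section ListSums.
Context {A : Type}.
Implicit Types (f g : A -> R) (l : list A).

Lemma lsum_cons f x l : lsum f (x :: l) = f x + lsum f l.
Proof. reflexivity. Qed.

Lemma lsum_perm f l l' : Permutation l l' -> lsum f l = lsum f l'.
Proof. unfold lsum. induction 1; simpl; lra. Qed.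

Lemma lsum_map {B : Type} (f : B -> R) (h : A -> B) l :
  lsum f (map h l) = lsum (fun x => f (h x)) l.
Proof. unfold lsum. rewrite map_map. reflexivity. Qed.

Lemma lsum_ext f g l : (forall x, In x l -> f x = g x) -> lsum f l = lsum g l.
Proof.
  induction l as [| x l IH]; intros Hfg; [reflexivity |].
  rewrite !lsum_cons, (Hfg x (or_introl eq_refl)), IH; [reflexivity |].
  intros; apply Hfg; now right.
Qed.

Lemma lsum_add f g l : lsum (fun x => f x + g x) l = lsum f l + lsum g l.
Proof. induction l; rewrite ?lsum_cons; [unfold lsum; simpl; lra | rewrite IHl; ring]. Qed.

Lemma lsum_sub f g l : lsum (fun x => f x - g x) l = lsum f l - lsum g l.
Proof. induction l; rewrite ?lsum_cons; [unfold lsum; simpl; lra | rewrite IHl; ring]. Qed.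

Lemma lsum_mul_l c f l : lsum (fun x => c * f x) l = c * lsum f l.
Proof. induction l; rewrite ?lsum_cons; [unfold lsum; simpl; lra | rewrite IHl; ring]. Qed.

Lemma lsum_mul_r c f l : lsum (fun x => f x * c) l = lsum f l * c.
Proof. induction l; rewrite ?lsum_cons; [unfold lsum; simpl; lra | rewrite IHl; ring]. Qed.

Lemma lsum_const c l : lsum (fun _ => c) l = INR (length l) * c.
Proof.
  induction l; rewrite ?lsum_cons; [unfold lsum; simpl; lra |].
  rewrite IHl; simpl length; rewrite S_INR; ring.
Qed.

Lemma lsum_le f g l : (forall x, In x l -> f x <= g x) -> lsum f l <= lsum g l.
Proof.
  induction l as [| x l IH]; intros Hfg; [unfold lsum; simpl; lra |].
  rewrite !lsum_cons. apply Rplus_le_compat; [apply Hfg; now left | apply IH; intros; apply Hfg; now right].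
Qed.

Lemma lsum_nonneg f l : (forall x, In x l -> 0 <= f x) -> 0 <= lsum f l.
Proof. intros Hpos. rewrite <- (Rmult_0_r (INR (length l))), <- lsum_const. apply lsum_le, Hpos. Qed.

Lemma lsum_ge_term f l x : (forall y, In y l -> 0 <= f y) -> In x l -> f x <= lsum f l.
Proof.
  induction l as [| y l IH]; intros Hpos Hx; [destruct Hx |].
  rewrite lsum_cons. destruct Hx as [<- | Hx].
  - enough (0 <= lsum f l) by lra. apply lsum_nonneg; intros; apply Hpos; now right.
  - pose proof (Hpos y (or_introl eq_refl)).
    enough (f x <= lsum f l) by lra. apply IH; auto; intros; apply Hpos; now right.
Qed.

End ListSums.

Lemma lsum_comm {A B : Type} (F : A -> B -> R) (l : list A) (l' : list B) :
  lsum (fun x => lsum (fun y => F x y) l') l = lsum (fun y => lsum (fun x => F x y) l) l'.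
Proof.
  induction l as [| x l IH].
  - transitivity (lsum (fun _ : B => 0) l').
    + rewrite lsum_const. unfold lsum; simpl; ring.
    + apply lsum_ext; reflexivity.
  - rewrite lsum_cons, IH, <- lsum_add. apply lsum_ext; intros; reflexivity.
Qed.

Lemma lsum_perm_map {A B : Type} (f : B -> R) (h h' : A -> B) l l' :
  Permutation (map h l) (map h' l') -> lsum (fun x => f (h x)) l = lsum (fun x => f (h' x)) l'.
Proof. intros Hp. rewrite <- (lsum_map f h), <- (lsum_map f h'). apply lsum_perm, Hp. Qed.

Lemma list_extremes (l : list R) : l <> nil ->
  exists lo hi, In lo l /\ In hi l /\ forall y, In y l -> lo <= y <= hi.
Proof.
  induction l as [| x l IH]; intros Hne; [congruence |].
  destruct l as [| x' l].
  - exists x, x. split; [now left | split; [now left |]]. intros y [<- | []]; lra.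
  - destruct IH as (lo & hi & Hlo & Hhi & Hb); [discriminate |].
    exists (Rmin x lo), (Rmax x hi). split; [| split].
    + unfold Rmin; destruct (Rle_dec x lo); [now left | now right].
    + unfold Rmax; destruct (Rle_dec x hi); [now right | now left].
    + intros y [<- | Hy]; [split; [apply Rmin_l | apply Rmax_l] |].
      specialize (Hb y Hy). split; [apply Rle_trans with lo; [apply Rmin_r | lra]
                                    | apply Rle_trans with hi; [lra | apply Rmax_r]].
Qed.

Lemma in_perm_cons {A : Type} (x : A) (l : list A) : In x l -> exists r, Permutation l (x :: r).
Proof.
  intros Hx. destruct (in_split _ _ Hx) as (l1 & l2 & ->).
  exists (l1 ++ l2). symmetry. apply Permutation_middle.
Qed.

Section BalancedPairs.

Variable f : R -> R -> R.
Hypothesis f_supermodular : supermodular f.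
Hypothesis f_sym_nonneg : forall b c, 0 <= f b c + f c b.

Let fp (p : R * R) : R := f (fst p) (snd p).

(* Replace the pairs [(a, c1)] and [(b, c)] by [(a, c)] and [(b, c1)]. *)
Lemma uncross a c (ps : list (R * R)) :
  In a (map fst ps) -> In c (map snd ps) ->
  (forall b c', In b (map fst ps) -> In c' (map snd ps) -> f a c + f b c' <= f a c' + f b c) ->
  exists rest, Permutation (map fst ps) (a :: map fst rest) /\
    Permutation (map snd ps) (c :: map snd rest) /\
    S (length rest) = length ps /\ f a c + lsum fp rest <= lsum fp ps.
Proof.
  intros ((a', c1) & Ea & Hac1)%in_map_iff ((b, c') & Ec & Hbc)%in_map_iff Hexch.
  simpl in Ea, Ec; subst a' c'.
  destruct (in_perm_cons _ _ Hac1) as [r1 Hr1].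
  destruct (Req_dec c1 c) as [<- | Hc1].
  - exists r1. rewrite (Permutation_map fst Hr1), (Permutation_map snd Hr1), (lsum_perm fp _ _ Hr1).
    rewrite (Permutation_length Hr1). split; [| split; [| split]]; reflexivity || (right; reflexivity).
  - assert (Hb : In (b, c) r1).
    { destruct (Permutation_in _ Hr1 Hbc) as [E | Hin]; [inversion E; congruence | exact Hin]. }
    destruct (in_perm_cons _ _ Hb) as [r2 Hr2].
    assert (Hps : Permutation ps ((a, c1) :: (b, c) :: r2)) by (rewrite Hr1; apply perm_skip, Hr2).
    exists ((b, c1) :: r2).
    rewrite (Permutation_map fst Hps), (Permutation_map snd Hps), (lsum_perm fp _ _ Hps),
      (Permutation_length Hps).
    split; [reflexivity | split; [apply perm_swap | split; [reflexivity |]]].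
    rewrite !lsum_cons. unfold fp; simpl.
    pose proof (Hexch b c1 (in_map fst _ _ Hbc) (in_map snd _ _ Hac1)). lra.
Qed.

Lemma balanced_sum_nonneg (ps : list (R * R)) :
  Permutation (map fst ps) (map snd ps) -> 0 <= lsum fp ps.
Proof.
  remember (length ps) as n eqn:Hn. revert ps Hn.
  induction n as [n IH] using lt_wf_ind; intros ps Hn Hbal.
  destruct ps as [| p ps']; [unfold lsum; simpl; lra |].
  destruct (list_extremes (map fst (p :: ps'))) as (lo & hi & Hlo & Hhi & Hfst); [discriminate |].
  set (ps := p :: ps') in *.
  assert (Hsnd : forall y, In y (map snd ps) -> lo <= y <= hi)
    by (intros y Hy; apply Hfst, (Permutation_in _ (Permutation_sym Hbal)), Hy).
  (* first make [(lo, hi)] a pair, then [(hi, lo)]: together they are nonnegative *)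
  destruct (uncross lo hi ps) as (r1 & Hf1 & Hs1 & Hl1 & Hsum1).
  { exact Hlo. } { apply (Permutation_in _ Hbal), Hhi. }
  { intros b c' Hb Hc'. destruct (Hfst b Hb), (Hsnd c' Hc').
    pose proof (f_supermodular lo b c' hi); lra. }
  assert (Hbal1 : Permutation (lo :: map fst r1) (hi :: map snd r1))
    by (rewrite <- Hf1, <- Hs1; exact Hbal).
  destruct (Req_dec lo hi) as [<- | Hne].
  - assert (0 <= lsum fp r1) by (apply (IH (length r1)); [lia | reflexivity | eapply Permutation_cons_inv, Hbal1]).
    pose proof (f_sym_nonneg lo lo). lra.
  - assert (Hfst1 : forall y, In y (map fst r1) -> lo <= y <= hi)
      by (intros y Hy; apply Hfst, (Permutation_in _ (Permutation_sym Hf1)); now right).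
    assert (Hsnd1 : forall y, In y (map snd r1) -> lo <= y <= hi)
      by (intros y Hy; apply Hsnd, (Permutation_in _ (Permutation_sym Hs1)); now right).
    destruct (uncross hi lo r1) as (r2 & Hf2 & Hs2 & Hl2 & Hsum2).
    { destruct (Permutation_in _ Hf1 Hhi) as [E | Hin]; [congruence | exact Hin]. }
    { destruct (Permutation_in _ Hbal1 (or_introl eq_refl)) as [E | Hin]; [congruence | exact Hin]. }
    { intros b c' Hb Hc'. destruct (Hfst1 b Hb), (Hsnd1 c' Hc').
      pose proof (f_supermodular b hi lo c'); lra. }
    assert (Hbal2 : Permutation (map fst r2) (map snd r2)).
    { apply (Permutation_cons_inv (a := hi)), (Permutation_cons_inv (a := lo)).
      rewrite <- Hf2, Hbal1, Hs2. apply perm_swap. }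
    assert (0 <= lsum fp r2) by (apply (IH (length r2)); [lia | reflexivity | exact Hbal2]).
    pose proof (f_sym_nonneg lo hi). lra.
Qed.

End BalancedPairs.

Lemma Fpair_perm_sum_ge a n (b : nat -> R) (σ : nat -> nat) :
  0 < a < 1 -> (0 < n)%nat -> Permutation (map σ (seq 0 n)) (seq 0 n) ->
  INR n * Fhat a (2 * lsum b (seq 0 n) / INR n)
  <= lsum (fun j => Fpair a (b j) (b (σ j))) (seq 0 n).
Proof.
  intros Ha Hn Hσ. assert (Hn' : INR n <> 0) by (apply not_0_INR; lia).
  set (x := 2 * lsum b (seq 0 n) / INR n).
  destruct (Fhat_above_tangent a x Ha) as [K HK].
  (* subtracting the tangent [T] of [Fhat] at [x] keeps [Fpair] supermodular and makes it
     symmetrically nonnegative *)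
  set (T s := Fhat a x + K * (s - x)).
  set (g p q := Fpair a p q - T (p + q)).
  assert (Hg_sup : supermodular g).
  { intros p p' q q' Hp Hq. pose proof (Fpair_supermodular a Ha p p' q q' Hp Hq).
    unfold g, T. lra. }
  assert (Hg_sym : forall p q, 0 <= g p q + g q p).
  { intros p q. pose proof (Fhat_le_Fpair_sym a p q Ha). pose proof (HK (p + q)).
    unfold g, T. rewrite (Rplus_comm q p). lra. }
  set (ps := map (fun j => (b j, b (σ j))) (seq 0 n)).
  assert (Hbal : Permutation (map fst ps) (map snd ps)).
  { unfold ps. rewrite !map_map. simpl. rewrite <- (map_map σ b).
    apply Permutation_map. symmetry. exact Hσ. }
  pose proof (balanced_sum_nonneg g Hg_sup Hg_sym ps Hbal) as H.
  unfold ps in H. rewrite lsum_map in H. unfold g, T in H. simpl in H.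
  rewrite lsum_sub, lsum_add, lsum_const, length_seq, lsum_mul_l, lsum_sub, lsum_add,
    lsum_const, length_seq in H.
  replace (lsum (fun j => b (σ j)) (seq 0 n)) with (lsum b (seq 0 n)) in H
    by (rewrite <- (lsum_map b σ); apply lsum_perm; symmetry; exact Hσ).
  replace (INR n * Fhat a x + K * (lsum b (seq 0 n) + lsum b (seq 0 n) - INR n * x))
    with (INR n * Fhat a x) in H by (unfold x; field; exact Hn').
  lra.
Qed.

Section LocalInequality.

Variables (a : R) (D : nat) (B ε : nat -> R) (C : nat -> nat -> R) (σ : nat -> nat).
Hypothesis Ha : 0 < a < 1.
Hypothesis HD : (0 < D)%nat.
Hypothesis Hσ : Permutation (map σ (seq 0 D)) (seq 0 D).
Hypothesis Hreturn : forall j, (j < D)%nat -> C (σ j) j = 0.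

Let I := seq 0 D.
Let Sa := lsum (fun k => exp (a * B k)) I.

Hypothesis Hrow : forall i, (i < D)%nat ->
  exp (a * B i) * (Sa - ε i * (INR D - Sa)) <= lsum (fun j => exp (a * C i j)) I.

Let tangent (i j : nat) : R :=
  (1 - / a) * exp (B i) * exp (a * B j) + / a * exp ((1 - a) * B i) * exp (a * C i j).

Lemma column_sum_ge j : (j < D)%nat ->
  lsum (fun i => tangent i j) I + Fpair a (B j) (B (σ j))
  <= lsum (fun i => exp (C i j - (1 - a) * B j)) I.
Proof.
  intros Hj.
  assert (Hσj : In (σ j) I).
  { apply (Permutation_in _ Hσ), in_map, in_seq. lia. }
  (* the term [i = σ j], where the two steps return to the base point, is kept exactly *)
  assert (Hexact : exp (C (σ j) j - (1 - a) * B j) - tangent (σ j) j = Fpair a (B j) (B (σ j))).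
  { unfold tangent, Fpair. rewrite Hreturn by exact Hj.
    rewrite Rmult_0_r, exp_0, exp_plus.
    replace (0 - (1 - a) * B j) with (- (1 - a) * B j) by ring. field. lra. }
  pose proof (lsum_ge_term (fun i => exp (C i j - (1 - a) * B j) - tangent i j) I (σ j))
    as Hterm.
  rewrite lsum_sub in Hterm. simpl in Hterm.
  enough (exp (C (σ j) j - (1 - a) * B j) - tangent (σ j) j
          <= lsum (fun i => exp (C i j - (1 - a) * B j)) I - lsum (fun i => tangent i j) I) by lra.
  apply Hterm; [| exact Hσj].
  intros i _. pose proof (exp_power_tangent a (B i) (B j) (C i j) Ha). unfold tangent. lra.
Qed.

Lemma tangent_row_sum_ge i : (i < D)%nat ->
  exp (B i) * Sa - / a * (INR D - Sa) * (exp (B i) * ε i) <= lsum (fun j => tangent i j) I.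
Proof.
  intros Hi. unfold tangent. rewrite lsum_add, !lsum_mul_l. fold Sa.
  assert (HE : exp ((1 - a) * B i) * exp (a * B i) = exp (B i))
    by (rewrite <- exp_plus; f_equal; ring).
  apply Rle_trans with
    ((1 - / a) * exp (B i) * Sa + / a * exp ((1 - a) * B i) * (exp (a * B i) * (Sa - ε i * (INR D - Sa)))).
  - right. replace (/ a * exp ((1 - a) * B i) * (exp (a * B i) * (Sa - ε i * (INR D - Sa))))
      with (/ a * (exp ((1 - a) * B i) * exp (a * B i)) * (Sa - ε i * (INR D - Sa))) by ring.
    rewrite HE. field. lra.
  - apply Rplus_le_compat_l, Rmult_le_compat_l; [| exact (Hrow i Hi)].
    apply Rmult_le_pos; [left; apply Rinv_0_lt_compat; lra | left; apply exp_pos].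
Qed.

Lemma local_inequality :
  INR D * Fhat a (2 * lsum B I / INR D) - / a * (INR D - Sa) * lsum (fun i => exp (B i) * ε i) I
  <= lsum (fun j => lsum (fun i => exp (C i j - (1 - a) * B j)) I) I
     - Sa * lsum (fun k => exp (B k)) I.
Proof.
  assert (Hcols : lsum (fun j => lsum (fun i => tangent i j) I + Fpair a (B j) (B (σ j))) I
                  <= lsum (fun j => lsum (fun i => exp (C i j - (1 - a) * B j)) I) I).
  { apply lsum_le. intros j Hj. apply in_seq in Hj. apply column_sum_ge. lia. }
  rewrite lsum_add, (lsum_comm (fun j i => tangent i j)) in Hcols.
  assert (Hrows : lsum (fun i => exp (B i) * Sa - / a * (INR D - Sa) * (exp (B i) * ε i)) I
                  <= lsum (fun i => lsum (fun j => tangent i j) I) I).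
  { apply lsum_le. intros i Hi. apply in_seq in Hi. apply tangent_row_sum_ge. lia. }
  rewrite lsum_sub, lsum_mul_r, lsum_mul_l in Hrows.
  pose proof (Fpair_perm_sum_ge a D B σ Ha HD Hσ) as Hpairs. fold I in Hpairs.
  lra.
Qed.

End LocalInequality.

Lemma NoDup_map_inj {A B : Type} (f : A -> B) (l : list A) x y :
  NoDup (map f l) -> In x l -> In y l -> f x = f y -> x = y.
Proof.
  induction l as [| z l IH]; simpl; intros Hnd Hx Hy Hf; [destruct Hx |].
  inversion Hnd as [| ? ? Hz Hnd']; subst.
  destruct Hx as [<- | Hx], Hy as [<- | Hy]; auto.
  - exfalso; apply Hz; rewrite Hf; apply in_map, Hy.
  - exfalso; apply Hz; rewrite <- Hf; apply in_map, Hx.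
Qed.

Lemma perm_of_injective {A : Type} (h : nat -> A) (n : nat) (l : list A) :
  NoDup l -> length l = n -> (forall i, (i < n)%nat -> In (h i) l) ->
  (forall i j, (i < n)%nat -> (j < n)%nat -> h i = h j -> i = j) ->
  Permutation (map h (seq 0 n)) l.
Proof.
  intros Hnd Hlen Hin Hinj. apply NoDup_Permutation_bis.
  - apply FinFun.Injective_map_NoDup_in; [| apply seq_NoDup].
    intros i j Hi%in_seq Hj%in_seq. apply Hinj; lia.
  - rewrite length_map, length_seq. lia.
  - intros w (i & <- & Hi%in_seq)%in_map_iff. apply Hin. lia.
Qed.

Lemma finite_choice (n : nat) (Q : nat -> nat -> Prop) :
  (forall j, (j < n)%nat -> exists i, Q j i) -> exists f, forall j, (j < n)%nat -> Q j (f j).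
Proof.
  induction n as [| n IH]; intros H.
  - exists (fun _ => 0%nat). intros; lia.
  - destruct IH as [f Hf]; [intros; apply H; lia |].
    destruct (H n (Nat.lt_succ_diag_r n)) as [i Hi].
    exists (fun j => if Nat.eq_dec j n then i else f j). intros j Hj.
    destruct (Nat.eq_dec j n) as [-> | Hne]; [exact Hi | apply Hf; lia].
Qed.

(* Around [x], the maps [eta] index the neighbours [y j = eta j x] of [x] and the
   neighbours [z i j = eta i (y j)] of each [y j]; [σ j] is the index leading back to [x]. *)
Lemma ricci_flat_frame {V : Type} (nb : V -> list V) (D : nat) (x : V) :
  ricci_flat nb D ->
  exists (y : nat -> V) (z : nat -> nat -> V) (σ : nat -> nat),
    Permutation (map y (seq 0 D)) (nb x) /\
    (forall j, (j < D)%nat -> Permutation (map (fun i => z i j) (seq 0 D)) (nb (y j))) /\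
    (forall i, (i < D)%nat ->
       Permutation (map (z i) (seq 0 D)) (map (fun j => z j i) (seq 0 D))) /\
    Permutation (map σ (seq 0 D)) (seq 0 D) /\
    (forall j, (j < D)%nat -> z (σ j) j = x).
Proof.
  intros [[Hnd [Hlen [Hsym _]]] Hflat].
  destruct (Hflat x) as (eta & Hadj & Hdist & Hcomm).
  set (y j := eta j x). set (z i j := eta i (y j)).
  assert (Hframe : forall u, u = x \/ adj nb x u ->
            Permutation (map (fun i => eta i u) (seq 0 D)) (nb u)).
  { intros u Hu. apply perm_of_injective; auto.
    - intros i Hi. apply Hadj; auto.
    - intros i j Hi Hj Heq. destruct (Nat.eq_dec i j) as [| Hij]; [assumption |].
      destruct (Hdist i j u Hi Hj Hij Hu Heq). }
  assert (Hy : forall j, (j < D)%nat -> adj nb x (y j)) by (intros; apply Hadj; auto).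
  assert (Hz : forall j, (j < D)%nat -> Permutation (map (fun i => z i j) (seq 0 D)) (nb (y j)))
    by (intros; apply Hframe; auto).
  destruct (finite_choice D (fun j i => (i < D)%nat /\ z i j = x)) as [σ Hσ].
  { intros j Hj.
    assert (Hx : In x (map (fun i => z i j) (seq 0 D)))
      by (apply (Permutation_in _ (Permutation_sym (Hz j Hj))), Hsym, Hy, Hj).
    apply in_map_iff in Hx as (i & Hzi & Hi%in_seq). exists i. split; [lia | exact Hzi]. }
  exists y, z, σ. split; [| split; [exact Hz | split; [| split]]].
  - apply Hframe; auto.
  - intros i Hi. apply Hcomm, Hi.
  - apply perm_of_injective; [apply seq_NoDup | apply length_seq | |].
    + intros j Hj. apply in_seq. destruct (Hσ j Hj). lia.
    + intros j k Hj Hk Hjk. destruct (Hσ j Hj) as [Hi Hzj], (Hσ k Hk) as [_ Hzk].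
      (* [z (σ j)] is injective, its values being the distinct neighbours of [y (σ j)] *)
      apply (NoDup_map_inj (z (σ j)) (seq 0 D)); [| apply in_seq; lia | apply in_seq; lia |].
      * apply (Permutation_NoDup (Permutation_sym (Hcomm _ Hi))).
        apply (Permutation_NoDup (Permutation_sym (Hz _ Hi))), Hnd.
      * rewrite Hzj, Hjk, Hzk. reflexivity.
  - intros j Hj. apply Hσ, Hj.
Qed.

Section Reindexing.

Context {V : Type} (nb : V -> list V) (D : nat) (mu0 a : R).

Lemma sum_nb_reindex (x : V) (h : nat -> V) (f : V -> R) :
  Permutation (map h (seq 0 D)) (nb x) -> sum_nb nb x f = lsum (fun j => f (h j)) (seq 0 D).
Proof.
  intros Hp. change (lsum f (nb x) = lsum (fun j => f (h j)) (seq 0 D)).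
  rewrite <- (lsum_perm f _ _ Hp). apply lsum_map.
Qed.

Lemma PsiH_Upsilon'_reindex (v : V -> R) (x : V) (h : nat -> V) :
  Permutation (map h (seq 0 D)) (nb x) ->
  PsiH nb mu0 Upsilon' v x = / mu0 * (lsum (fun j => exp (v (h j) - v x)) (seq 0 D) - INR D).
Proof.
  intros Hp. unfold PsiH, Upsilon'. rewrite (sum_nb_reindex x h _ Hp), lsum_sub, lsum_const, length_seq.
  ring.
Qed.

Lemma Lalpha_reindex (v : V -> R) (x : V) (h : nat -> V) :
  Permutation (map h (seq 0 D)) (nb x) ->
  Lalpha nb mu0 a v x = / a * / mu0 * (INR D - lsum (fun j => exp (a * (v (h j) - v x))) (seq 0 D)).
Proof.
  intros Hp. unfold Lalpha. rewrite (PsiH_Upsilon'_reindex _ x h Hp).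
  rewrite (lsum_ext _ (fun j => exp (a * (v (h j) - v x)))) by (intros; f_equal; ring).
  ring.
Qed.

Lemma Lop_reindex (v : V -> R) (x : V) (h : nat -> V) :
  Permutation (map h (seq 0 D)) (nb x) ->
  Lop nb mu0 v x = - / mu0 * lsum (fun j => v (h j) - v x) (seq 0 D).
Proof. intros Hp. unfold Lop, Laplacian. rewrite (sum_nb_reindex x h _ Hp). ring. Qed.

Lemma Calpha_reindex (v : V -> R) (x : V) (y : nat -> V) (z : nat -> nat -> V) :
  Permutation (map y (seq 0 D)) (nb x) ->
  (forall j, (j < D)%nat -> Permutation (map (fun i => z i j) (seq 0 D)) (nb (y j))) ->
  Calpha nb mu0 a v x = / mu0 * / mu0 *
    (lsum (fun j => lsum (fun i => exp (v (z i j) - v x - (1 - a) * (v (y j) - v x))) (seq 0 D))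
       (seq 0 D)
     - lsum (fun k => exp (a * (v (y k) - v x))) (seq 0 D)
       * lsum (fun k => exp (v (y k) - v x)) (seq 0 D)).
Proof.
  intros Hy Hz. unfold Calpha. rewrite (sum_nb_reindex x y _ Hy).
  rewrite (lsum_ext _ (fun j => / mu0 *
      (lsum (fun i => exp (v (z i j) - v x - (1 - a) * (v (y j) - v x))) (seq 0 D)
       - exp (a * (v (y j) - v x)) * lsum (fun k => exp (v (y k) - v x)) (seq 0 D)))).
  - rewrite lsum_mul_l, lsum_sub, lsum_mul_r. ring.
  - intros j Hj%in_seq. cbv beta.
    rewrite (PsiH_Upsilon'_reindex v (y j) _ (Hz j ltac:(lia))), (PsiH_Upsilon'_reindex v x y Hy).
    assert (E : exp (a * (v (y j) - v x)) * lsum (fun i => exp (v (z i j) - v (y j))) (seq 0 D)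
                = lsum (fun i => exp (v (z i j) - v x - (1 - a) * (v (y j) - v x))) (seq 0 D)).
    { rewrite <- lsum_mul_l. apply lsum_ext. intros i _. rewrite <- exp_plus. f_equal. ring. }
    rewrite <- E. ring.
Qed.

End Reindexing.

Lemma le_of_weighted_le p q La Lb : 0 < p -> 0 < q -> 0 < p * La -> q * Lb <= p * La ->
  Lb <= (1 + Rabs (p - q) / q) * La.
Proof.
  intros Hp Hq HpLa Hle.
  assert (HLa : 0 < La) by nra.
  pose proof (Rle_abs (p - q)).
  apply Rmult_le_reg_l with q; [exact Hq |].
  replace (q * ((1 + Rabs (p - q) / q) * La)) with ((q + Rabs (p - q)) * La) by (field; lra).
  nra.
Qed.

Lemma max_principle_row {V : Type} (nb : V -> list V) (D : nat) (mu0 a : R) (v psi : V -> R)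
  (x u : V) (y h : nat -> V) :
  0 < mu0 -> 0 < a -> 0 < psi x -> 0 < psi u ->
  Permutation (map y (seq 0 D)) (nb x) -> Permutation (map h (seq 0 D)) (nb u) ->
  0 < psi x * Lalpha nb mu0 a v x ->
  psi u * Lalpha nb mu0 a v u <= psi x * Lalpha nb mu0 a v x ->
  let S := lsum (fun k => exp (a * (v (y k) - v x))) (seq 0 D) in
  exp (a * (v u - v x)) * (S - Rabs (psi x - psi u) / psi u * (INR D - S))
  <= lsum (fun j => exp (a * (v (h j) - v x))) (seq 0 D).
Proof.
  intros Hmu Ha Hpx Hpu Hy Hh HM Hle S.
  pose proof (le_of_weighted_le _ _ _ _ Hpx Hpu HM Hle) as Hratio.
  rewrite (Lalpha_reindex nb D mu0 a v x y Hy), (Lalpha_reindex nb D mu0 a v u h Hh) in Hratio.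
  fold S in Hratio.
  set (e := Rabs (psi x - psi u) / psi u) in *.
  set (Q := lsum (fun j => exp (a * (v (h j) - v u))) (seq 0 D)) in *.
  assert (Hk : 0 < / a * / mu0) by (apply Rmult_lt_0_compat; apply Rinv_0_lt_compat; lra).
  assert (HQ : S - e * (INR D - S) <= Q) by nra.
  replace (lsum (fun j => exp (a * (v (h j) - v x))) (seq 0 D)) with (exp (a * (v u - v x)) * Q).
  - apply Rmult_le_compat_l; [left; apply exp_pos | exact HQ].
  - unfold Q. rewrite <- lsum_mul_l. apply lsum_ext. intros j _. rewrite <- exp_plus. f_equal. ring.
Qed.

Theorem corollary5p1 (V : Type) (nb : V -> list V) (D : nat) (mu0 alpha : R)
  (x0 : V) (psi v : V -> R) :
  ricci_flat nb D -> (2 <= D)%nat -> 0 < mu0 ->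
  0 < alpha < 1 ->
  0 < psi x0 -> (forall y, adj nb x0 y -> 0 < psi y) ->
  let M := fun x => psi x * Lalpha nb mu0 alpha v x in
  0 < M x0 -> (forall y, adj nb x0 y -> M y <= M x0) ->
  Calpha nb mu0 alpha v x0 >=
    Falpha D mu0 alpha (Lop nb mu0 v x0)
    - / mu0 * Lalpha nb mu0 alpha v x0 *
      sum_nb nb x0 (fun y => exp (v y - v x0) * (Rabs (psi x0 - psi y) / psi y)).
Proof.
  intros Hflat HD Hmu Ha Hpx Hpy M HM Hmax.
  destruct (ricci_flat_frame nb D x0 Hflat) as (y & z & σ & Hy & Hz & Hcomm & Hσ & Hret).
  assert (Hadj : forall j, (j < D)%nat -> adj nb x0 (y j))
    by (intros j Hj; apply (Permutation_in _ Hy), in_map, in_seq; lia).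
  unshelve epose proof (local_inequality alpha D (fun j => v (y j) - v x0)
    (fun j => Rabs (psi x0 - psi (y j)) / psi (y j)) (fun i j => v (z i j) - v x0) σ
    Ha _ Hσ _ _) as Hloc; cbv beta.
  - lia.
  - intros j Hj. rewrite Hret by exact Hj. ring.
  - intros i Hi.
    rewrite (lsum_perm_map (fun w => exp (alpha * (v w - v x0))) _ _ _ _ (Hcomm i Hi)).
    exact (max_principle_row nb D mu0 alpha v psi x0 (y i) y (fun j => z j i) Hmu ltac:(lra)
             Hpx (Hpy _ (Hadj i Hi)) Hy (Hz i Hi) HM (Hmax _ (Hadj i Hi))).
  - cbv beta in Hloc.
    rewrite (Calpha_reindex nb D mu0 alpha v x0 y z Hy Hz), (Lop_reindex nb D mu0 v x0 y Hy),
      (Lalpha_reindex nb D mu0 alpha v x0 y Hy), (sum_nb_reindex nb D x0 y _ Hy).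
    rewrite Falpha_Fhat by (lia || lra).
    assert (0 <= / mu0 * / mu0) by (rewrite <- Rinv_mult; left; apply Rinv_0_lt_compat; nra).
    apply Rle_ge. nra.
Qed.
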